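(* Let $P$ be a continuous poset. A persistence module $M$ over $P$ is ephemeral if and only if $j_*M=0$. In other words, the full subcategory of ephemeral modules equals the kernel of $j_*$.
   Context: Let $P$ be a poset. A subset is directed if nonempty and any two elements have an upper bound in it. $x\ll y$ ($x$ way below $y$) means: for every directed $D$ whose supremum exists with $y\le\sup D$, some $d\in D$ satisfies $x\le d$. $P$ is continuous if for each $p$ the set $\{x:x\ll p\}$ is directed with supremum $p$. A set $U\subseteq P$ is Scott-open if it is an up-set meeting every directed set whose supremum exists and lies in $U$; $P^\sigma$ is $P$ with the Scott topology. $k$ is a commutative ring with unity; a persistence module over $P$ is a functor $M$ from $P$ (as a category, $p\to q$ iff $p\le q$) to $k$-modules. For an up-set $U$, $M(U)=\varprojlim_{x\in U}M_x$. $j_*M$ denotes the sheaf of $k$-modules on $P^\sigma$ given by $U\mapsto M(U)$ for Scott-open $U$ (the direct image along the identity $j$ from $P$ with the Alexandrov topology to $P^\sigma$ of the sheaf associated to $M$). A persistence module $M$ is ephemeral if $M(p\le q)=0$ for all $p\ll q$. *)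

From HB Require Import structures.
From mathcomp Require Import all_boot all_order all_algebra.
Set Implicit Arguments. Unset Strict Implicit. Unset Printing Implicit Defensive.
Import Order.TTheory GRing.Theory.
Local Open Scope order_scope.

Section PosetNotions.
Context {disp : Order.disp_t} {P : porderType disp}.

Definition directed (D : P -> Prop) : Prop :=
  (exists d, D d) /\
  (forall a b, D a -> D b -> exists c, [/\ D c, a <= c & b <= c]).

Definition is_sup (D : P -> Prop) (s : P) : Prop :=
  (forall d, D d -> d <= s) /\
  (forall u, (forall d, D d -> d <= u) -> s <= u).

Definition way_below (x y : P) : Prop :=
  forall (D : P -> Prop) (s : P), directed D -> is_sup D s -> y <= s ->
    exists d, D d /\ x <= d.

Definition continuous_poset : Prop :=
  forall p : P, directed (fun x => way_below x p) /\
                is_sup (fun x => way_below x p) p.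

Definition upset (U : P -> Prop) : Prop :=
  forall x y, x <= y -> U x -> U y.

Definition scott_open (U : P -> Prop) : Prop :=
  upset U /\
  (forall (D : P -> Prop) (s : P), directed D -> is_sup D s -> U s ->
     exists d, D d /\ U d).

End PosetNotions.

Record pmodule {disp : Order.disp_t} (P : porderType disp) (k : comPzRingType) := PModule {
  pm_obj :> P -> lmodType k;
  pm_map : forall p q : P, p <= q -> {linear pm_obj p -> pm_obj q};
  pm_id : forall (p : P) (h : p <= p) (x : pm_obj p), pm_map h x = x;
  pm_comp : forall (p q r : P) (hpq : p <= q) (hqr : q <= r) (hpr : p <= r)
              (x : pm_obj p), pm_map hpr x = pm_map hqr (pm_map hpq x)
}.

Section Modules.
Context {disp : Order.disp_t} {P : porderType disp} {k : comPzRingType}.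

(* Elements of M(U) = lim_{x in U} M_x, realized concretely (standard model of
   a limit of k-modules) as compatible families over U. *)
Definition compatible_family (M : pmodule P k) (U : P -> Prop)
    (s : forall x : P, U x -> M x) : Prop :=
  forall (x y : P) (h : x <= y) (hx : U x) (hy : U y),
    @pm_map _ _ _ M _ _ h (s x hx) = s y hy.

Definition limit_zero (M : pmodule P k) (U : P -> Prop) : Prop :=
  forall s : forall x : P, U x -> M x, @compatible_family M U s ->
    forall (x : P) (hx : U x), s x hx = 0%R.

(* j_* M = 0 : the sheaf U |-> M(U) on the Scott topology vanishes. *)
Definition jstar_zero (M : pmodule P k) : Prop :=
  forall U : P -> Prop, scott_open U -> limit_zero M U.

Definition ephemeral (M : pmodule P k) : Prop :=
  forall (p q : P) (h : p <= q), way_below p q ->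
    forall x : M p, @pm_map _ _ _ M _ _ h x = 0%R.

End Modules.

From mathcomp Require Import all_boot all_order all_algebra.
Import Order.TTheory.
Local Open Scope order_scope.

(* Ephemeral => j_*M = 0: a compatible family on a Scott-open U is, at each
   x in U, the image of its value at some d << x with d in U (continuity),
   and M(d <= x) vanishes.  Conversely, for p << q the vectors M(p <= y) v
   form a compatible family on the way-above set of p, which is Scott-open by
   interpolation; its vanishing at q is the ephemeral condition. *)

Section WayBelow.
Context {disp : Order.disp_t} {P : porderType disp}.

Lemma directed_eq (y : P) : directed (eq^~ y).
Proof. by split; [exists y | move=> a b -> ->; exists y]. Qed.

Lemma is_sup_eq (y : P) : is_sup (eq^~ y) y.
Proof. by split; [move=> d -> | move=> u; apply]. Qed.

Lemma way_below_le {x y : P} : way_below x y -> x <= y.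
Proof.
by move=> xy; have [d [-> //]] := xy _ y (directed_eq y) (is_sup_eq y) (lexx y).
Qed.

Lemma le_way_below_trans {x y z : P} :
  x <= y -> way_below y z -> way_below x z.
Proof.
move=> le_xy yz D s dirD supD le_zs.
have [d [Dd le_yd]] := yz D s dirD supD le_zs.
by exists d; split=> //; apply: le_trans le_yd.
Qed.

Lemma way_below_le_trans {x y z : P} :
  way_below x y -> y <= z -> way_below x z.
Proof.
by move=> xy le_yz D s dirD supD le_zs; apply: xy dirD supD (le_trans le_yz _).
Qed.

Hypothesis contP : continuous_poset (P := P).

Lemma way_below_interpolate {p s : P} :
  way_below p s -> exists z, way_below p z /\ way_below z s.
Proof.
move=> ps.
pose E y := exists z, way_below y z /\ way_below z s.
have dirE : directed E.
  split.
    have [[z zs] _] := (contP s).1.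
    by have [[y yz] _] := (contP z).1; exists y, z.
  move=> a b [z1 [az1 z1s]] [z2 [bz2 z2s]].
  have [z [zs le_z1z le_z2z]] := (contP s).1.2 _ _ z1s z2s.
  have [c [cz le_ac le_bc]] :=
    (contP z).1.2 _ _ (way_below_le_trans az1 le_z1z) (way_below_le_trans bz2 le_z2z).
  by exists c; split=> //; exists z.
have supE : is_sup E s.
  split=> [d [z [dz zs]]|u ub_u].
    exact: le_trans (way_below_le dz) (way_below_le zs).
  apply: (contP s).2.2 => z zs; apply: (contP z).2.2 => y yz.
  by apply: ub_u; exists z.
have [d [[z [dz zs]] le_pd]] := ps E s dirE supE (lexx s).
by exists z; split=> //; apply: le_way_below_trans le_pd dz.
Qed.

Lemma scott_open_way_above (p : P) : scott_open (way_below p).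
Proof.
split=> [a b le_ab pa|D s dirD supD ps]; first exact: way_below_le_trans pa le_ab.
have [z [pz zs]] := way_below_interpolate ps.
have [d [Dd le_zd]] := zs D s dirD supD (lexx s).
by exists d; split=> //; apply: way_below_le_trans pz le_zd.
Qed.

Lemma scott_open_way_below_witness {U : P -> Prop} {x : P} :
  scott_open U -> U x -> exists d, way_below d x /\ U d.
Proof. by move=> [_ inaccU] Ux; have [dir sup] := contP x; exact: inaccU dir sup Ux. Qed.

End WayBelow.

Section Modules.
Context {disp : Order.disp_t} {P : porderType disp} {k : comPzRingType}.
Variable M : pmodule P k.

Lemma pm_map_irrelevant {p q : P} (h h' : p <= q) (v : M p) :
  pm_map M h v = pm_map M h' v.
Proof. by rewrite (bool_irrelevance h h'). Qed.

Lemma compatible_pm_map_family {p : P} {U : P -> Prop}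
    (le_pU : forall y, U y -> p <= y) (v : M p) :
  compatible_family (fun y (Uy : U y) => pm_map M (le_pU y Uy) v).
Proof. by move=> a b le_ab Ua Ub; symmetry; apply: pm_comp. Qed.

Lemma ephemeral_limit_zero (U : P -> Prop) :
  continuous_poset (P := P) -> ephemeral M -> scott_open U -> limit_zero M U.
Proof.
move=> contP ephM openU s compat_s x Ux.
have [d [dx Ud]] := scott_open_way_below_witness contP openU Ux.
by rewrite -(compat_s d x (way_below_le dx) Ud Ux) ephM.
Qed.

Lemma limit_zero_way_above_ephemeral :
  (forall p : P, limit_zero M (way_below p)) -> ephemeral M.
Proof.
move=> zeroM p q le_pq pq v.
have := zeroM p _ (compatible_pm_map_family (@way_below_le _ _ p) v) q pq.
by rewrite (pm_map_irrelevant _ le_pq).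
Qed.

End Modules.

Theorem mainTheorem4 (disp : Order.disp_t) (P : porderType disp)
    (k : comPzRingType) (M : pmodule P k) :
  continuous_poset (P := P) -> (ephemeral M <-> jstar_zero M).
Proof.
move=> contP; split=> [ephM U|zeroM].
  exact: ephemeral_limit_zero.
apply: limit_zero_way_above_ephemeral => p.
exact/zeroM/scott_open_way_above.
Qed.
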